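(* For all connected graphs $G_1$ and $G_2$, $$\operatorname{tw}(G_1\times G_2)\leq \tau(G_1)(\operatorname{tw}(G_2)+1)(\Delta(G_2)+1)\quad\text{and}\quad \operatorname{pw}(G_1\times G_2)\leq \tau(G_1)(\operatorname{pw}(G_2)+1)(\Delta(G_2)+1).$$
   Context: $\operatorname{tw}$ and $\operatorname{pw}$ denote treewidth and pathwidth; $\Delta$ denotes maximum degree. The vertex cover number $\tau(G)$ is the minimum size of a set $A\subseteq V(G)$ such that $V(G)\setminus A$ is an independent set. The direct product $G_1 \times G_2$ has vertex set $V(G_1)\times V(G_2)$, with $(a,v)(b,u)$ an edge iff $ab\in E(G_1)$ and $uv\in E(G_2)$. *)

(* Finite simple graphs are given as (T : finType, e : rel T)
   with e symmetric and irreflexive. *)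
From Stdlib Require Import ClassicalEpsilon.
From mathcomp Require Import all_boot.
Set Implicit Arguments. Unset Strict Implicit. Unset Printing Implicit Defensive.

Section Graphs.
Variables (T : finType) (e : rel T).

Definition connected_graph : Prop := forall x y : T, connect e x y.

Definition max_degree : nat := \max_(x : T) #|[set y | e x y]|.

Definition is_vertex_cover (A : {set T}) : bool :=
  [forall x, forall y, e x y ==> (x \in A) || (y \in A)].

Definition vc_pred (k : nat) : bool :=
  [exists A : {set T}, is_vertex_cover A && (#|A| == k)].

Lemma vc_pred_ex : exists k, vc_pred k.
Proof.
exists #|[set: T]|; apply/existsP; exists [set: T].
rewrite eqxx andbT; apply/forallP => x; apply/forallP => y.
by rewrite in_setT implybT.
Qed.

Definition vertex_cover_number : nat := ex_minn vc_pred_ex.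

Definition is_tree (n : nat) (et : rel 'I_n) : Prop :=
  0 < n /\ symmetric et /\ irreflexive et /\
  (forall i j : 'I_n, connect et i j) /\
  #|[set p : 'I_n * 'I_n | et p.1 p.2]| = 2 * (n - 1).

Definition path_rel (n : nat) : rel 'I_n :=
  fun i j => (i.+1 == j :> nat) || (j.+1 == i :> nat).

Definition is_decomposition (n : nat) (et : rel 'I_n) (B : 'I_n -> {set T})
  : Prop :=
  (forall v : T, exists i, v \in B i) /\
  (forall u v : T, e u v -> exists i, (u \in B i) && (v \in B i)) /\
  (forall (v : T) (i j : 'I_n), v \in B i -> v \in B j ->
     connect (fun a b => [&& et a b, v \in B a & v \in B b]) i j).

Definition width (n : nat) (B : 'I_n -> {set T}) : nat :=
  (\max_(i < n) #|B i|).-1.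

Definition tw_prop (k : nat) : Prop :=
  exists n (et : rel 'I_n) (B : 'I_n -> {set T}),
    is_tree et /\ is_decomposition et B /\ width B <= k.

Definition pw_prop (k : nat) : Prop :=
  exists n (B : 'I_n -> {set T}),
    0 < n /\ is_decomposition (@path_rel n) B /\ width B <= k.

Definition tw_pred (k : nat) : bool :=
  if excluded_middle_informative (tw_prop k) then true else false.
Definition pw_pred (k : nat) : bool :=
  if excluded_middle_informative (pw_prop k) then true else false.

Let B1 : 'I_1 -> {set T} := fun _ => [set: T].

Lemma trivial_dec (et : rel 'I_1) : is_decomposition et B1.
Proof.
split; first by move=> v; exists ord0; rewrite in_setT.
split; first by move=> u v _; exists ord0; rewrite !in_setT.
move=> v i j _ _; have -> : i = j by apply/val_inj; case: i j => [[|?] ?] [[|?] ?].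
exact: connect0.
Qed.

Lemma tw_pred_ex : exists k, tw_pred k.
Proof.
exists (width B1); rewrite /tw_pred; case: excluded_middle_informative => // H.
exfalso; apply: H; exists 1, (fun _ _ => false), B1; split; last first.
  by split; [exact: trivial_dec | ].
split=> //; split=> //; split=> //; split.
  by move=> i j; have -> : i = j by apply/val_inj; case: i j => [[|?] ?] [[|?] ?].
by apply/eqP; rewrite cards_eq0; apply/eqP/setP => p; rewrite !inE.
Qed.

Lemma pw_pred_ex : exists k, pw_pred k.
Proof.
exists (width B1); rewrite /pw_pred; case: excluded_middle_informative => // H.
by exfalso; apply: H; exists 1, B1; split=> //; split; [exact: trivial_dec|].
Qed.

Definition treewidth : nat := ex_minn tw_pred_ex.
Definition pathwidth : nat := ex_minn pw_pred_ex.

End Graphs.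

Definition direct_prod (T1 T2 : finType) (e1 : rel T1) (e2 : rel T2)
  : rel (T1 * T2)%type :=
  fun x y => e1 x.1 y.1 && e2 x.2 y.2.

(* Let A be a vertex cover of G1 and (T, B) a tree decomposition of G2 of width
   k.  Every edge of G1 x G2 has an endpoint in A x V(G2), and for a in A the
   nodes t with w in N[B_t] form a subtree, so the bags A x N[B_t] (of size at
   most |A|(k+1)(Delta+1)) handle all vertices with first coordinate in A.  A
   vertex p = (b, w) gets a pendant bag {p} u A x N[B_t] at a node t with
   w in B_t, which contains all its neighbours.  For a path decomposition a
   pendant bag cannot hang off the path; instead each node t is replaced by a
   run of copies, the copy indexed by p carrying the extra vertex p. *)

From Stdlib Require Import ClassicalEpsilon.
From mathcomp Require Import all_boot zify.
Set Implicit Arguments. Unset Strict Implicit. Unset Printing Implicit Defensive.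

Section ClosedNeighbourhood.
Variables (T : finType) (e : rel T).

Definition closed_nbhd (X : {set T}) : {set T} :=
  \bigcup_(u in X) (u |: [set y | e u y]).

Lemma closed_nbhdP (X : {set T}) w :
  reflect (exists2 u, u \in X & (u == w) || e u w) (w \in closed_nbhd X).
Proof.
by apply: (iffP bigcupP) => -[u uX uw]; exists u; rewrite // !inE eq_sym in uw *.
Qed.

Lemma mem_closed_nbhd (X : {set T}) w : w \in X -> w \in closed_nbhd X.
Proof. by move=> wX; apply/bigcupP; exists w; rewrite ?setU11. Qed.

Lemma closed_nbhd_edge (X : {set T}) u w :
  u \in X -> e u w -> w \in closed_nbhd X.
Proof. by move=> uX euw; apply/bigcupP; exists u; rewrite // !inE euw orbT. Qed.

Lemma card_closed_nbhd (X : {set T}) :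
  #|closed_nbhd X| <= #|X| * (max_degree e).+1.
Proof.
rewrite -sum_nat_const.
apply: (@leq_trans (\sum_(u in X) #|u |: [set y | e u y]|)).
  apply: (big_ind2 (fun (S : {set T}) n => #|S| <= n)) => //.
  - by rewrite cards0.
  - by move=> S1 n1 S2 n2 h1 h2; apply: leq_trans (leq_card_setU _ _) (leq_add h1 h2).
apply: leq_sum => u _; rewrite cardsU1 -add1n.
apply: leq_add (leq_b1 _) _; rewrite /max_degree.
exact: (@leq_bigmax_cond _ xpredT (fun x => #|[set y | e x y]|) u).
Qed.

End ClosedNeighbourhood.

Section GraphParameters.
Variables (T : finType) (e : rel T).

Lemma tw_predP k : reflect (tw_prop e k) (tw_pred e k).
Proof. by rewrite /tw_pred; case: excluded_middle_informative => H; constructor. Qed.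

Lemma pw_predP k : reflect (pw_prop e k) (pw_pred e k).
Proof. by rewrite /pw_pred; case: excluded_middle_informative => H; constructor. Qed.

Lemma treewidth_spec : tw_prop e (treewidth e).
Proof. by rewrite /treewidth; case: ex_minnP => k /tw_predP. Qed.

Lemma treewidth_leq k : tw_prop e k -> treewidth e <= k.
Proof. by move=> /tw_predP; rewrite /treewidth; case: ex_minnP => m _; apply. Qed.

Lemma pathwidth_spec : pw_prop e (pathwidth e).
Proof. by rewrite /pathwidth; case: ex_minnP => k /pw_predP. Qed.

Lemma pathwidth_leq k : pw_prop e k -> pathwidth e <= k.
Proof. by move=> /pw_predP; rewrite /pathwidth; case: ex_minnP => m _; apply. Qed.

Lemma vertex_cover_numberP :
  exists2 A : {set T}, is_vertex_cover e A & #|A| = vertex_cover_number e.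
Proof.
rewrite /vertex_cover_number; case: ex_minnP => k /existsP[A /andP[A_cover /eqP]].
by exists A.
Qed.

Lemma width_leqP n (B : 'I_n -> {set T}) k :
  reflect (forall t, #|B t| <= k.+1) (width B <= k).
Proof.
rewrite /width; apply: (iffP idP) => [le_w t | le_B].
  have := @leq_bigmax_cond _ xpredT (fun i => #|B i|) t isT.
  by move: le_w; set M := \max_(i < n) #|B i|; lia.
have : \max_(i < n) #|B i| <= k.+1 by apply/bigmax_leqP => i _; exact: le_B.
lia.
Qed.

End GraphParameters.

Definition restrict (S : Type) (r : rel S) (P : pred S) : rel S :=
  fun a b => [&& r a b, P a & P b].

Lemma restrict_sym (S : Type) (r : rel S) (P : pred S) :
  symmetric r -> symmetric (restrict r P).
Proof. by move=> r_sym a b; rewrite /restrict r_sym [P a && _]andbC. Qed.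

Lemma path_rel_sym n : symmetric (@path_rel n).
Proof. by move=> i j; rewrite /path_rel orbC. Qed.

Lemma connect_homo (S S' : finType) (r : rel S) (r' : rel S') (h : S -> S') :
  (forall a b, r a b -> r' (h a) (h b)) ->
  forall x y, connect r x y -> connect r' (h x) (h y).
Proof.
move=> hr x _ /connectP[p rp ->]; elim: p x rp => [|z p IH] x /=.
  by rewrite connect0.
by case/andP=> /hr/connect1/connect_trans ctr /IH; exact: ctr.
Qed.

Definition decomposition_on (T S : finType) (e : rel T) (r : rel S)
    (B : S -> {set T}) : Prop :=
  (forall v, exists i, v \in B i) /\
  (forall u v, e u v -> exists i, (u \in B i) && (v \in B i)) /\
  (forall v i j, v \in B i -> v \in B j ->
     connect (restrict r (fun a => v \in B a)) i j).

Definition tree_on (S : finType) (r : rel S) : Prop :=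
  [/\ 0 < #|S|, symmetric r, irreflexive r, forall i j, connect r i j &
      #|[set p : S * S | r p.1 p.2]| = 2 * (#|S| - 1)].

Lemma tree_onP n (et : rel 'I_n) : is_tree et <-> tree_on et.
Proof.
rewrite /is_tree /tree_on card_ord.
by split=> [[n0 [? [? [? ?]]]] | [n0 ? ? ? ?]]; split.
Qed.

Section Relabelling.
Variables (S S' : finType) (h : S' -> S).
Hypothesis h_bij : bijective h.

Lemma tree_on_relpre (r : rel S) : tree_on r -> tree_on (relpre h r).
Proof.
have [g hK gK] := h_bij; have card_S := bij_eq_card h_bij.
case=> S0 r_sym r_irr r_conn r_card; split; rewrite ?card_S //.
- by move=> x y /=; rewrite r_sym.
- by move=> x /=; rewrite r_irr.
- move=> i j; rewrite -(hK i) -(hK j).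
  by apply: (connect_homo (r := r)) => [a b|]; rewrite /= ?gK.
rewrite -r_card -(on_card_preimset (f := fun p : S' * S' => (h p.1, h p.2))).
  by apply: eq_card => p; rewrite !inE.
by exists (fun q => (g q.1, g q.2)) => [[a b]|[a b]] _ /=; rewrite ?hK ?gK.
Qed.

Lemma decomposition_on_relpre (T : finType) (e : rel T) (r : rel S)
    (B : S -> {set T}) :
  decomposition_on e r B -> decomposition_on e (relpre h r) (B \o h).
Proof.
have [g hK gK] := h_bij.
case=> B_cover [B_edge B_conn]; split; [|split].
- by move=> v; have [i vi] := B_cover v; exists (g i); rewrite /= gK.
- by move=> u v /B_edge[i uvi]; exists (g i); rewrite /= gK.
move=> v i j vi vj; rewrite -(hK i) -(hK j).
apply: (connect_homo (r := restrict r (fun a => v \in B a))) => [a b|].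
  by rewrite /restrict /= !gK.
exact: B_conn.
Qed.

End Relabelling.

Lemma tw_prop_tree_on (T S : finType) (e : rel T) (r : rel S)
    (B : S -> {set T}) k :
  tree_on r -> decomposition_on e r B -> (forall i, #|B i| <= k.+1) ->
  tw_prop e k.
Proof.
move=> r_tree B_dec B_size.
exists #|S|, (relpre enum_val r), (B \o enum_val); split; [|split].
- by apply/tree_onP; apply: tree_on_relpre r_tree; exact: enum_val_bij.
- by apply: decomposition_on_relpre B_dec; exact: enum_val_bij.
- by apply/width_leqP => t; exact: B_size.
Qed.

Section PendantTree.
Variables (S X : finType) (r : rel S) (f : X -> S).

Definition pendant_rel : rel (S + X) := fun a b =>
  match a, b with
  | inl s, inl t => r s t
  | inl s, inr x | inr x, inl s => f x == s
  | inr _, inr _ => false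
  end.

Lemma card_edges_pendant_rel :
  #|[set p | pendant_rel p.1 p.2]| = #|[set p | r p.1 p.2]| + 2 * #|X|.
Proof.
have card_rel (Y : finType) (q : rel Y) :
    #|[set p : Y * Y | q p.1 p.2]| = \sum_a \sum_b (q a b : nat).
  by rewrite -sum1_card big_mkcond pair_big /=; apply: eq_bigr => -[a b] _; rewrite inE.
have attach (x : X) : \sum_(s : S) (f x == s : nat) = 1.
  by rewrite (bigD1 (f x)) //= eqxx big1 // => s /negPf; rewrite eq_sym => ->.
rewrite card_rel big_sumType /=.
under eq_bigr => s _ do rewrite big_sumType /=.
under [X in _ + X]eq_bigr => x _ do rewrite big_sumType /= big1_eq addn0 attach.
rewrite big_split /= -card_rel [X in _ + X + _]exchange_big /=.
under [X in _ + X + _]eq_bigr => x _ do rewrite attach.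
by rewrite sum1_card -addnA addnn -mul2n.
Qed.

Lemma tree_on_pendant : tree_on r -> tree_on pendant_rel.
Proof.
case=> S0 r_sym r_irr r_conn r_card; split.
- by rewrite card_sum ltn_addr.
- by case=> [s|x] [t|y] //=; rewrite r_sym.
- by case=> [s|x] //=; rewrite r_irr.
- have lift_r s t : connect pendant_rel (inl s) (inl t).
    by apply: (connect_homo (r := r)) => //; exact: r_conn.
  have [s0 _] := card_gt0P S0.
  have root_conn a : connect pendant_rel a (inl s0) /\ connect pendant_rel (inl s0) a.
    case: a => [s|x]; first by split; apply: lift_r.
    have xf : pendant_rel (inr x) (inl (f x)) by rewrite /= eqxx.
    have fx : pendant_rel (inl (f x)) (inr x) by rewrite /= eqxx.
    by split; [apply: connect_trans (connect1 xf) (lift_r _ _)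
              | apply: connect_trans (lift_r _ _) (connect1 fx)].
  by move=> a b; apply: connect_trans (root_conn a).1 (root_conn b).2.
- rewrite card_edges_pendant_rel r_card card_sum; lia.
Qed.

End PendantTree.

(* The nodes whose bag meets [N[w]] form a connected set: each is linked, along
   the subtree of some [u] in [N[w]], to a node whose bag holds the edge [uw]. *)
Lemma decomposition_closed_nbhd_connect (T S : finType) (e : rel T) (r : rel S)
    (B : S -> {set T}) w s t :
  decomposition_on e r B ->
  w \in closed_nbhd e (B s) -> w \in closed_nbhd e (B t) ->
  connect (restrict r (fun a => w \in closed_nbhd e (B a))) s t.
Proof.
case=> _ [B_edge B_conn].
set R := restrict r _.
have subtree_conn u i j : (u == w) || e u w -> u \in B i -> u \in B j ->
    connect R i j.
  move=> uw ui uj; apply: connect_sub (B_conn u i j ui uj) => c d /and3P[rcd uc ud].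
  apply: connect1; rewrite /R /restrict rcd /=.
  by apply/andP; split; apply/closed_nbhdP; exists u.
have to_home i : w \in closed_nbhd e (B i) ->
    exists2 h, w \in B h & connect R i h /\ connect R h i.
  case/closed_nbhdP=> u ui /orP[/eqP<-|euw].
    by exists i => //; rewrite connect0.
  have [h /andP[uh wh]] := B_edge u w euw.
  by exists h => //; split; apply: (subtree_conn u); rewrite ?euw ?orbT.
move=> /to_home[h wh [sh _]] /to_home[h' wh' [_ h't]].
have hh' : connect R h h' by apply: (subtree_conn w); rewrite ?eqxx.
exact: connect_trans sh (connect_trans hh' h't).
Qed.

Section ProductBags.
Variables (T1 T2 S : finType) (e1 : rel T1) (e2 : rel T2) (A : {set T1}).
Variables (r : rel S) (B : S -> {set T2}) (home : T2 -> S).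
Hypotheses (e2_sym : symmetric e2) (A_cover : is_vertex_cover e1 A).
Hypotheses (B_dec : decomposition_on e2 r B) (homeP : forall w, w \in B (home w)).

Definition core_bag (t : S) : {set T1 * T2} := setX A (closed_nbhd e2 (B t)).

Definition pendant_bag (p : T1 * T2) : {set T1 * T2} := p |: core_bag (home p.2).

Lemma card_core_bag k t :
  #|B t| <= k.+1 -> #|core_bag t| <= #|A| * k.+1 * (max_degree e2).+1.
Proof.
move=> Bt; rewrite cardsX -mulnA leq_mul2l.
by rewrite (leq_trans (card_closed_nbhd _ _)) ?leq_mul2r ?Bt ?orbT.
Qed.

Lemma mem_pendant_bag p : p \in pendant_bag p.
Proof. exact: setU11. Qed.

Lemma direct_prod_edge_in_pendant_bag u v :
  direct_prod e1 e2 u v ->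
  exists p, (u \in pendant_bag p) && (v \in pendant_bag p).
Proof.
case: u v => [u1 u2] [v1 v2] /andP[/= e1uv e2uv].
have := forallP (forallP A_cover u1) v1; rewrite e1uv /= => /orP[uA | vA].
  exists (v1, v2); rewrite mem_pendant_bag andbT setU1r // in_setX uA.
  by apply: closed_nbhd_edge (homeP v2) _; rewrite e2_sym.
exists (u1, u2); rewrite mem_pendant_bag setU1r // in_setX vA.
exact: closed_nbhd_edge (homeP u2) e2uv.
Qed.

Lemma mem_pendant_bag_uncovered a w p :
  a \notin A -> ((a, w) \in pendant_bag p) = (p == (a, w)).
Proof. by move=> aA; rewrite in_setU1 in_setX (negPf aA) orbF eq_sym. Qed.

Lemma mem_pendant_bag_covered a w p :
  a \in A -> ((a, w) \in pendant_bag p) = ((a, w) \in core_bag (home p.2)).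
Proof.
move=> aA; rewrite in_setU1; case: eqP => //= <-.
by rewrite in_setX aA mem_closed_nbhd.
Qed.

Lemma core_bag_connect a w s t :
  (a, w) \in core_bag s -> (a, w) \in core_bag t ->
  connect (restrict r (fun i => (a, w) \in core_bag i)) s t.
Proof.
rewrite /core_bag !in_setX /= => /andP[aA ws] /andP[_ wt].
rewrite (eq_connect (e' := restrict r (fun i => w \in closed_nbhd e2 (B i)))).
  exact: decomposition_closed_nbhd_connect B_dec ws wt.
by move=> i j; rewrite /restrict /core_bag !in_setX aA.
Qed.

Lemma card_pendant_bag k p :
  (forall t, #|B t| <= k.+1) ->
  #|pendant_bag p| <= (#|A| * k.+1 * (max_degree e2).+1).+1.
Proof. by move=> B_size; rewrite cardsU1 -add1n leq_add ?leq_b1 ?card_core_bag. Qed.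

Definition tree_bag (x : S + (T1 * T2)) : {set T1 * T2} :=
  match x with inl t => core_bag t | inr p => pendant_bag p end.

(* A vertex [(a, w)] with [a] outside the cover lies only in its own pendant
   bag; with [a] in the cover, every bag holding it is attached to a core bag
   holding it, and the core bags holding it are connected. *)
Lemma decomposition_on_pendant :
  decomposition_on (direct_prod e1 e2) (pendant_rel r (fun p => home p.2))
    tree_bag.
Proof.
split; [|split].
- by move=> v; exists (inr v); exact: mem_pendant_bag.
- by move=> u v /direct_prod_edge_in_pendant_bag[p uvp]; exists (inr p).
move=> [a w] x y; case: (boolP (a \in A)) => aA; last first.
  have only_pendant z : (a, w) \in tree_bag z -> z = inr (a, w).
    case: z => [t|p] /=; first by rewrite /core_bag in_setX (negPf aA).
    by rewrite mem_pendant_bag_uncovered // => /eqP->.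
  by move=> /only_pendant-> /only_pendant->; exact: connect0.
set R := restrict _ _.
pose node (z : S + (T1 * T2)) := match z with inl t => t | inr p => home p.2 end.
have to_core z : (a, w) \in tree_bag z -> [/\ (a, w) \in core_bag (node z),
    connect R z (inl (node z)) & connect R (inl (node z)) z].
  case: z => [t|p] /= awz; first by rewrite awz !connect0.
  have awc : (a, w) \in core_bag (home p.2) by rewrite -mem_pendant_bag_covered.
  by split => //; apply: connect1; rewrite /R /restrict /= eqxx awz awc.
move=> /to_core[ax xc cx] /to_core[ay yc cy].
apply: connect_trans xc (connect_trans _ cy).
apply: (connect_homo (r := restrict r (fun i => (a, w) \in core_bag i))) => //.
exact: core_bag_connect ax ay.
Qed.

End ProductBags.

Lemma tw_prop_direct_prod (T1 T2 : finType) (e1 : rel T1) (e2 : rel T2)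
    (A : {set T1}) k :
  symmetric e2 -> is_vertex_cover e1 A -> tw_prop e2 k ->
  tw_prop (direct_prod e1 e2) (#|A| * k.+1 * (max_degree e2).+1).
Proof.
move=> e2_sym A_cover [n [et [B [/tree_onP et_tree [B_dec /width_leqP B_size]]]]].
have [home homeP] := @fin_all_exists _ (fun _ => 'I_n) (fun w i => w \in B i) B_dec.1.
apply: (tw_prop_tree_on (tree_on_pendant (fun p : T1 * T2 => home p.2) et_tree)
         (decomposition_on_pendant e2_sym A_cover B_dec homeP)).
case=> [t|p] /=; first exact/leqW/card_core_bag.
exact: card_pendant_bag.
Qed.

Lemma connect_lift (S S' : finType) (r : rel S) (r' : rel S') (h : S' -> S)
    (P : pred S) :
  (forall s, P s -> exists s', h s' = s) ->
  (forall x y, P (h x) -> P (h y) -> (h x == h y) || r (h x) (h y) ->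
     connect r' x y) ->
  forall x y, P (h x) -> connect (restrict r P) (h x) (h y) -> connect r' x y.
Proof.
move=> h_onto lift_step x y Px /connectP[p]; elim: p x Px => [|s p IH] x Px /=.
  by move=> _ hyx; apply: lift_step; rewrite ?hyx ?eqxx.
case/andP=> /and3P[rxs _ Ps] ps hy; have [s' hs'] := h_onto s Ps; subst s.
by apply: connect_trans (lift_step x s' Px Ps _) (IH s' Ps ps hy); rewrite rxs orbT.
Qed.

Lemma connect_path_interval m (Q : pred 'I_m) (i j : 'I_m) :
  i <= j -> (forall k : 'I_m, i <= k <= j -> Q k) ->
  connect (restrict (@path_rel m) Q) i j.
Proof.
move: {2}(j - i) (erefl (j - i)) => d; elim: d j => [|d IH] j dji lij Q_ij.
  by apply: eq_connect0; apply/val_inj => /=; lia.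
have j'_lt : j.-1 < m by have := ltn_ord j; lia.
pose j' := Ordinal j'_lt.
apply: (connect_trans (y := j')).
  apply: IH => /=; try lia.
  by move=> k /andP[ik kj']; apply: Q_ij; rewrite ik /= (leq_trans kj') //; lia.
apply: connect1; rewrite /restrict /path_rel /= !Q_ij //= ?leqnn; lia.
Qed.

Section PathBlowup.
Variables (n M : nat).

Lemma div_ord_subproof (i : 'I_(n * M)) : i %/ M < n.
Proof.
case: M i => [|M'] [i /= i_lt]; first by rewrite muln0 in i_lt.
by rewrite ltn_divLR.
Qed.

(* Node [i] of the path on ['I_(n * M)] is the copy number [i %% M] of node
   [i %/ M] of the path on ['I_n]. *)
Definition div_ord (i : 'I_(n * M)) : 'I_n := Ordinal (div_ord_subproof i).

Lemma connect_path_div (P : pred 'I_n) (x y : 'I_(n * M)) :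
  P (div_ord x) -> connect (restrict (@path_rel n) P) (div_ord x) (div_ord y) ->
  connect (restrict (@path_rel (n * M)) (fun i => P (div_ord i))) x y.
Proof.
have M_gt0 : 0 < M by case: M x => [|//] [x /=]; rewrite muln0.
set R := restrict (@path_rel (n * M)) _.
have interval_conn (i j : 'I_(n * M)) : i <= j -> P (div_ord i) -> P (div_ord j) ->
    div_ord j <= (div_ord i).+1 -> connect R i j.
  move=> lij Pi Pj near_ij; apply: connect_path_interval lij _ => k /andP[ik kj].
  have ik' : div_ord i <= div_ord k by apply: leq_div2r.
  have kj' : div_ord k <= div_ord j by apply: leq_div2r.
  have [->//|ne_ki] := eqVneq (div_ord k) (div_ord i).
  suff -> : div_ord k = div_ord j by [].
  apply/val_inj/eqP; move: ne_ki ik' kj' near_ij; rewrite -val_eqE /=.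
  move: (i %/ M) (j %/ M) (k %/ M) => a b c; lia.
apply: connect_lift => [s _ | i j Pi Pj near_ij].
  have s_lt : s * M < n * M by rewrite ltn_mul2r M_gt0 ltn_ord.
  by exists (Ordinal s_lt); apply/val_inj; rewrite /= mulnK.
have [near1 near2] : div_ord j <= (div_ord i).+1 /\ div_ord i <= (div_ord j).+1.
  by case/orP: near_ij => [/eqP->|/orP[]/eqP]; lia.
have [lij|lji] := leqP i j; first exact: interval_conn.
rewrite (sym_connect_sym (restrict_sym _ (@path_rel_sym _))).
exact: interval_conn (ltnW lji) Pj Pi near2.
Qed.

End PathBlowup.

Section PathProduct.
Variables (T1 T2 : finType) (e1 : rel T1) (e2 : rel T2) (A : {set T1}).
Variables (n : nat) (B : 'I_n -> {set T2}) (home : T2 -> 'I_n).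
Hypotheses (e2_sym : symmetric e2) (A_cover : is_vertex_cover e1 A).
Hypotheses (B_dec : is_decomposition e2 (@path_rel n) B).
Hypothesis homeP : forall w, w \in B (home w).

Let M := #|{: T1 * T2}|.+1.

Lemma enum_rank_lt (p : T1 * T2) : enum_rank p < M.
Proof. exact/leqW/ltn_ord. Qed.

Lemma code_subproof (p : T1 * T2) : home p.2 * M + enum_rank p < n * M.
Proof.
apply: (@leq_trans ((home p.2).+1 * M)).
  by rewrite mulSn addnC ltn_add2r enum_rank_lt.
by rewrite leq_mul2r ltn_ord orbT.
Qed.

(* The vertex [p] gets its own copy of the path node [home p.2]. *)
Definition code (p : T1 * T2) : 'I_(n * M) := Ordinal (code_subproof p).

Lemma div_ord_code p : div_ord (code p) = home p.2.
Proof.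
by apply/val_inj; rewrite /= divnMDl // divn_small ?addn0 ?enum_rank_lt.
Qed.

Lemma code_inj : injective code.
Proof.
move=> p q /(congr1 (fun i : 'I_(n * M) => i %% M)) /=.
by rewrite !modnMDl !modn_small ?enum_rank_lt // => /val_inj/enum_rank_inj.
Qed.

Definition path_bag (i : 'I_(n * M)) : {set T1 * T2} :=
  core_bag e2 A B (div_ord i) :|: [set p | code p == i].

Lemma card_path_bag k i :
  (forall t, #|B t| <= k.+1) ->
  #|path_bag i| <= (#|A| * k.+1 * (max_degree e2).+1).+1.
Proof.
move=> B_size; rewrite -addn1 (leq_trans (leq_card_setU _ _)) // leq_add //.
  exact: card_core_bag.
by apply/card_le1_eqP => p q; rewrite !inE => /eqP <- /eqP/code_inj.
Qed.

Lemma pendant_bag_sub_path_bag p :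
  pendant_bag e2 A B home p \subset path_bag (code p).
Proof.
apply/subsetP => q; rewrite /path_bag div_ord_code in_setU1 in_setU !inE.
by case/orP=> [/eqP->|->]; rewrite ?eqxx ?orbT.
Qed.

Lemma mem_path_bag_covered a w i :
  a \in A -> ((a, w) \in path_bag i) = ((a, w) \in core_bag e2 A B (div_ord i)).
Proof.
move=> aA; rewrite in_setU inE; case: eqP => [<-|_]; last by rewrite orbF.
by rewrite div_ord_code orbT /core_bag in_setX aA mem_closed_nbhd.
Qed.

Lemma decomposition_on_path_bag :
  decomposition_on (direct_prod e1 e2) (@path_rel (n * M)) path_bag.
Proof.
split; [|split].
- by move=> v; exists (code v); rewrite in_setU inE eqxx orbT.
- move=> u v /(direct_prod_edge_in_pendant_bag e2_sym A_cover homeP)[p /andP[up vp]].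
  by exists (code p); rewrite !(subsetP (pendant_bag_sub_path_bag p)).
move=> [a w] i j; case: (boolP (a \in A)) => aA; last first.
  have only_code k : (a, w) \in path_bag k -> k = code (a, w).
    by rewrite in_setU /core_bag in_setX (negPf aA) inE => /eqP.
  by move=> /only_code-> /only_code->; exact: connect0.
rewrite !mem_path_bag_covered // => awi awj.
rewrite (eq_connect (e' := restrict (@path_rel (n * M))
          (fun k => (a, w) \in core_bag e2 A B (div_ord k)))); last first.
  by move=> k l; rewrite /restrict !mem_path_bag_covered.
apply: (connect_path_div (P := fun t => (a, w) \in core_bag e2 A B t)) => //.
exact: (core_bag_connect (r := @path_rel n) B_dec awi awj).
Qed.

End PathProduct.

Lemma pw_prop_direct_prod (T1 T2 : finType) (e1 : rel T1) (e2 : rel T2)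
    (A : {set T1}) k :
  symmetric e2 -> is_vertex_cover e1 A -> pw_prop e2 k ->
  pw_prop (direct_prod e1 e2) (#|A| * k.+1 * (max_degree e2).+1).
Proof.
move=> e2_sym A_cover [n [B [n_gt0 [B_dec /width_leqP B_size]]]].
have [home homeP] := @fin_all_exists _ (fun _ => 'I_n) (fun w i => w \in B i) B_dec.1.
exists (n * #|{: T1 * T2}|.+1), (path_bag e2 A B home); split.
  by rewrite muln_gt0 n_gt0.
split; first exact: decomposition_on_path_bag.
by apply/width_leqP => i; exact: card_path_bag.
Qed.

Theorem mainTheorem18 (T1 T2 : finType) (e1 : rel T1) (e2 : rel T2) :
  symmetric e1 -> irreflexive e1 -> symmetric e2 -> irreflexive e2 ->
  connected_graph e1 -> connected_graph e2 ->
  treewidth (direct_prod e1 e2) <=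
    vertex_cover_number e1 * (treewidth e2).+1 * (max_degree e2).+1
  /\
  pathwidth (direct_prod e1 e2) <=
    vertex_cover_number e1 * (pathwidth e2).+1 * (max_degree e2).+1.
Proof.
move=> _ _ e2_sym _ _ _.
have [A A_cover <-] := vertex_cover_numberP e1.
split.
- exact/treewidth_leq/tw_prop_direct_prod/treewidth_spec.
- exact/pathwidth_leq/pw_prop_direct_prod/pathwidth_spec.
Qed.
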